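(* Let $F=F_2$ be the free group on $x,y$, $F^{(1)}=[F,F]$, $F^{(2)}=[F^{(1)},F^{(1)}]$, and let $w\in F^{(1)}\setminus F^{(2)}$. Then the rational functions $\Phi_w(\lambda,\mu)$ and $\Psi_w(\lambda,\mu)$ defined below are both nonzero and are linearly independent (over $\mathbb{C}$).
   Context: Write $[a,b]=aba^{-1}b^{-1}$ and $w_{n,m}=[x^n,y^m]$ for nonzero integers $n,m$. The elements $w_{n,m}$ ($n,m\neq 0$) freely generate $F^{(1)}$, so every $w\in F^{(1)}$ has a unique shortest (reduced) expression $w=\prod_{i=1}^r w_{n_i,m_i}^{s_i}$ with $s_i\neq 0$. Let $\mathrm{Supp}(w)$ be the set of pairs $(n,m)$ for which $w_{n,m}$ occurs in this expression, and $R_w(n,m)$ the sum of the exponents $s_i$ over all occurrences of $w_{n,m}$. Define $$\Phi_w(\lambda,\mu)=\sum_{(\alpha,\beta)\in \mathrm{Supp}(w)} R_w(\alpha,\beta)\,\mathrm{sgn}(\alpha)\,(1-\mu^{2\beta})\,\frac{(\lambda^{2|\alpha|}-1)\lambda^{\alpha}}{\lambda^{|\alpha|-1}(\lambda^2-1)},$$ $$\Psi_w(\lambda,\mu)=\sum_{(\alpha,\beta)\in \mathrm{Supp}(w)} R_w(\alpha,\beta)\,\mathrm{sgn}(\beta)\,(\lambda^{2\alpha}-1)\,\frac{(\mu^{2|\beta|}-1)\mu^{\beta}}{\mu^{|\beta|-1}(\mu^2-1)}.$$ *)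

From HB Require Import structures.
From mathcomp Require Import all_boot all_order all_algebra all_field.
Set Implicit Arguments. Unset Strict Implicit. Unset Printing Implicit Defensive.
Import Order.TTheory GRing.Theory Num.Theory.
Local Open Scope ring_scope.

(* A letter is (g, e): g = false for x, g = true for y; e = true means inverse. *)
Definition letter := (bool * bool)%type.
Definition word := seq letter.

Definition cancel_cons (a : letter) (l : word) : word :=
  if l is b :: l' then (if b == (a.1, ~~ a.2) then l' else a :: l) else [:: a].

Definition fnorm (s : word) : word := foldr cancel_cons [::] s.
Definition freduced (s : word) : bool := fnorm s == s.

Definition fmul (u v : word) : word := fnorm (u ++ v).
Definition finv (u : word) : word := rev (map (fun a : letter => (a.1, ~~ a.2)) u).
Definition fpow (u : word) (n : int) : word :=
  fnorm (flatten (nseq `|n|%N (if (0 <= n)%R then u else finv u))).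
Definition fx : word := [:: (false, false)].
Definition fy : word := [:: (true, false)].
Definition fcomm (a b : word) : word := fnorm (a ++ b ++ finv a ++ finv b).

Inductive gen_subgroup (S : word -> Prop) : word -> Prop :=
  | gs_one : gen_subgroup S [::]
  | gs_mem u : S u -> gen_subgroup S u
  | gs_mul u v : gen_subgroup S u -> gen_subgroup S v -> gen_subgroup S (fmul u v)
  | gs_inv u : gen_subgroup S u -> gen_subgroup S (finv u).

Definition F1 : word -> Prop :=
  gen_subgroup (fun c => exists a b, freduced a /\ freduced b /\ c = fcomm a b).
Definition F2 : word -> Prop :=
  gen_subgroup (fun c => exists a b, F1 a /\ F1 b /\ c = fcomm a b).

Definition wnm (n m : int) : word := fcomm (fpow fx n) (fpow fy m).

(* an expression prod_i w_{n_i,m_i}^{s_i} is a list of ((n_i, m_i), s_i) *)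
Definition wexpr := seq ((int * int) * int).

Definition wexpr_eval (e : wexpr) : word :=
  foldr (fun t acc => fmul (fpow (wnm t.1.1 t.1.2) t.2) acc) [::] e.

(* reduced (= shortest) expression: n_i, m_i, s_i nonzero and no two
   consecutive factors with the same generator w_{n,m} *)
Definition wexpr_reduced (e : wexpr) : bool :=
  all (fun t => [&& t.1.1 != 0, t.1.2 != 0 & t.2 != 0]) e &&
  sorted (fun t t' => t.1 != t'.1) e.

Definition Supp (e : wexpr) : seq (int * int) := undup (map fst e).
Definition Rw (e : wexpr) (p : int * int) : int :=
  \sum_(t <- e | t.1 == p) t.2.

Definition RatF := {fraction {poly {poly algC}}}.
Definition lam : RatF := tofrac (('X : {poly algC})%:P).
Definition mu : RatF := tofrac ('X : {poly {poly algC}}).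
Definition cst (c : algC) : RatF := tofrac ((c%:P)%:P).

Definition Phi (e : wexpr) : RatF :=
  \sum_(p <- Supp e)
    ((Rw e p)%:~R * (Num.sg p.1)%:~R * (1 - mu ^ (2 * p.2))
     * ((lam ^ (2 * `|p.1|) - 1) * lam ^ p.1)
     / (lam ^ (`|p.1| - 1) * (lam ^+ 2 - 1))).

Definition Psi (e : wexpr) : RatF :=
  \sum_(p <- Supp e)
    ((Rw e p)%:~R * (Num.sg p.2)%:~R * (lam ^ (2 * p.1) - 1)
     * ((mu ^ (2 * `|p.2|) - 1) * mu ^ p.2)
     / (mu ^ (`|p.2| - 1) * (mu ^+ 2 - 1))).

(* Write w as a product of single generators w_{n,m}^{±1}.  If every
   exponent sum R_w(n,m) vanished, each generator could be cancelled against an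
   occurrence of its inverse, using u A u^-1 B = [u, A] (A B) with u, A in F^(1); so
   w would lie in F^(2).  Hence some R_w(n,m) is nonzero.
   Multiplied by λ^{2N} μ^{2M} (N, M the largest |n|, |m| occurring), the summand of
   Φ_w for (α, β) becomes R_w(α,β) sgn(α) times a run of consecutive odd powers of λ
   times μ^{2M} - μ^{2(M+β)}, and the summand of Ψ_w is, up to sign, the same with λ
   and μ exchanged.  So Φ_w only has monomials λ^odd μ^even and Ψ_w only λ^even μ^odd,
   and it remains to find one nonzero coefficient of each: for Φ_w take, among the
   pairs with R_w(α,β) ≠ 0, one with |α| maximal; the extreme exponent of its λ-run
   together with μ^{2(M+β)} is contributed by no other pair. *)

From Pilot Require Import Defs.
From HB Require Import structures.
From mathcomp Require Import all_boot all_order all_algebra all_field.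
Import Order.TTheory GRing.Theory Num.Theory.
From mathcomp Require Import zify ring.
Set Implicit Arguments. Unset Strict Implicit. Unset Printing Implicit Defensive.

Local Notation finv := Defs.finv.

Definition linv (a : letter) : letter := (a.1, ~~ a.2).
Definition reduced (s : word) : bool := sorted (fun a b => b != linv a) s.
Definition act (s r : word) : word := foldr cancel_cons r s.

Lemma reduced_cancel_cons a r : reduced r -> reduced (cancel_cons a r).
Proof.
case: r => [|b r] //= rr; case: eqP => ba; first by move: rr; case: r => //= c r /andP[].
by rewrite /reduced /= rr andbT; apply/eqP.
Qed.

Lemma reduced_act s r : reduced r -> reduced (act s r).
Proof. by elim: s => //= a s IH rr; apply/reduced_cancel_cons/IH. Qed.

Lemma reduced_fnorm s : reduced (fnorm s).
Proof. exact: reduced_act. Qed.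

Lemma fnorm_id r : reduced r -> fnorm r = r.
Proof.
elim: r => //= a r IH ar; rewrite IH; last exact: path_sorted ar.
case: r ar {IH} => //= b r /andP[ab _].
by rewrite (negbTE ab).
Qed.

Lemma freduced_fnorm s : freduced (fnorm s).
Proof. by rewrite /freduced fnorm_id // reduced_fnorm. Qed.

Lemma cancel_consK a r : reduced r -> cancel_cons a (cancel_cons (linv a) r) = r.
Proof.
case: a => a1 a2; case: r => [|b r] /=; first by rewrite eqxx.
rewrite /linv /= negbK; case: eqP => [->|_] rr /=; last by rewrite eqxx.
by case: r rr => [|c r] //= /andP[cb _]; rewrite (negbTE cb).
Qed.

Lemma act_cat s t r : act (s ++ t) r = act s (act t r).
Proof. exact: foldr_cat. Qed.

Lemma act_cancel_cons a u r : reduced r -> act (cancel_cons a u) r = cancel_cons a (act u r).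
Proof.
move=> rr; case: u => [|b u] //=; case: eqP => [->|] //=.
by rewrite -[(a.1, ~~ a.2)]/(linv a) cancel_consK // reduced_act.
Qed.

Lemma act_fnorm s r : reduced r -> act (fnorm s) r = act s r.
Proof. by move=> rr; elim: s => //= a s IH; rewrite act_cancel_cons // IH. Qed.

Lemma fnorm_cat s t : fnorm (s ++ t) = act s (fnorm t).
Proof. exact: foldr_cat. Qed.

Lemma fnorm_catl s t : fnorm (fnorm s ++ t) = fnorm (s ++ t).
Proof. by rewrite !fnorm_cat act_fnorm // reduced_fnorm. Qed.

Lemma fnorm_catr s t : fnorm (s ++ fnorm t) = fnorm (s ++ t).
Proof. by rewrite !fnorm_cat fnorm_id // reduced_fnorm. Qed.

Lemma finvK : involutive finv.
Proof.
move=> s; rewrite /finv map_rev revK -map_comp -[RHS]map_id.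
by apply: eq_map => -[a1 a2]; rewrite /= negbK.
Qed.

Lemma act_mulfV s r : reduced r -> act (s ++ finv s) r = r.
Proof.
elim: s r => //= a s IH r rr.
rewrite /finv /= rev_cons -cats1 -/(finv s) catA act_cat /= IH ?cancel_consK //.
exact: reduced_cancel_cons.
Qed.

Lemma act_mulVf s r : reduced r -> act (finv s ++ s) r = r.
Proof. by move=> rr; rewrite -{2}(finvK s) act_mulfV. Qed.

(** * Words with vanishing exponent sums lie in F^(2) *)

Lemma fmul_fcomm u a b :
  fmul (fcomm u (fnorm a)) (fnorm (a ++ b)) = fnorm (u ++ a ++ finv u ++ b).
Proof.
rewrite /fmul /fcomm fnorm_catl fnorm_catr -!catA !fnorm_cat.
have br : reduced (fnorm b) by apply: reduced_fnorm.
rewrite -(act_fnorm a br) -(act_cat (finv (fnorm a))) act_mulVf //.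
by rewrite -(act_fnorm a (reduced_act _ br)).
Qed.

Lemma F2_insert_conj u a b : F1 u -> F1 (fnorm a) -> F2 (fnorm (a ++ b)) ->
  F2 (fnorm (u ++ a ++ finv u ++ b)).
Proof.
move=> u1 a1 ab2; rewrite -fmul_fcomm; apply: gs_mul ab2.
by apply: gs_mem; exists u, (fnorm a).
Qed.

Definition wgen (q : (int * int) * bool) : word :=
  if q.2 then finv (wnm q.1.1 q.1.2) else wnm q.1.1 q.1.2.
Definition wgen_prod (L : seq ((int * int) * bool)) : word := flatten (map wgen L).
Definition exp_sum (L : seq ((int * int) * bool)) (q : int * int) : int :=
  \sum_(x <- L | x.1 == q) (if x.2 then -1 else 1)%R.

Lemma wgen_prod_cat L L' : wgen_prod (L ++ L') = wgen_prod L ++ wgen_prod L'.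
Proof. by rewrite /wgen_prod map_cat flatten_cat. Qed.

Lemma F1_wnm n m : F1 (wnm n m).
Proof. by apply: gs_mem; exists (fpow fx n), (fpow fy m); rewrite !freduced_fnorm. Qed.

Lemma F1_wgen q : F1 (wgen q).
Proof. by rewrite /wgen; case: ifP => _; [apply: gs_inv|]; apply: F1_wnm. Qed.

Lemma F1_wgen_prod L : F1 (fnorm (wgen_prod L)).
Proof.
elim: L => [|q L IH]; first exact: gs_one.
by rewrite /wgen_prod /= -fnorm_catr; apply: (gs_mul (F1_wgen q) IH).
Qed.

Lemma exp_sum_cons q L p :
  exp_sum (q :: L) p = ((if q.1 == p then if q.2 then -1 else 1 else 0) + exp_sum L p)%R.
Proof. by rewrite /exp_sum big_cons; case: ifP; rewrite ?add0r. Qed.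

Lemma exp_sum_cat L L' p : exp_sum (L ++ L') p = (exp_sum L p + exp_sum L' p)%R.
Proof. exact: big_cat. Qed.

Lemma exp_sum_cons_neq0 p s L : (p, ~~ s) \notin L -> exp_sum ((p, s) :: L) p != 0%R.
Proof.
have sign_sum : (p, ~~ s) \notin L ->
    exp_sum L p = ((count (fun x => x.1 == p) L)%:Z * (if s then -1 else 1))%R.
  elim: L => [|[p' s'] L IH] /=; first by rewrite /exp_sum big_nil mul0r.
  rewrite in_cons negb_or exp_sum_cons => /andP[qp /IH ->] /=.
  have [pp | _] := eqVneq p' p; last by rewrite add0r.
  by move: qp; rewrite {}pp; clear IH; case: s s' => -[]; rewrite /= ?eqxx //= => _; lia.
by move=> /sign_sum; rewrite exp_sum_cons eqxx => ->; case: s {sign_sum} => /=; lia.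
Qed.

Lemma F2_wgen_prod L : (forall q, exp_sum L q = 0%R) -> F2 (fnorm (wgen_prod L)).
Proof.
elim: {L}(size L) {-2}L (leqnn (size L)) => [|n IH] [|[p s] L] //= Ln;
  try by move=> _; apply: gs_one.
move=> L0; have pL : (p, ~~ s) \in L by apply: contraT => /exp_sum_cons_neq0; rewrite L0.
case/splitPr: pL Ln L0 => A B Ln L0.
have -> : wgen_prod ((p, s) :: A ++ (p, ~~ s) :: B) =
    wgen (p, s) ++ wgen_prod A ++ finv (wgen (p, s)) ++ wgen_prod B.
  by rewrite /wgen_prod /= map_cat flatten_cat /=; case: (s); rewrite /wgen /= ?finvK.
apply: F2_insert_conj; [exact: F1_wgen | exact: F1_wgen_prod | rewrite -wgen_prod_cat].
apply: IH => [|q]; first by move: Ln; rewrite !size_cat /=; lia.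
have := L0 q; rewrite exp_sum_cons !exp_sum_cat exp_sum_cons /=.
by case: (p == q); case: (s) => /= <-; ring.
Qed.

Definition expand (e : wexpr) : seq ((int * int) * bool) :=
  flatten (map (fun t => nseq (absz t.2) (t.1, (t.2 < 0)%R)) e).

Lemma wexpr_eval_expand e : wexpr_eval e = fnorm (wgen_prod (expand e)).
Proof.
elim: e => [|t e IH] //=.
rewrite /expand /= -/(expand e) wgen_prod_cat /fmul IH fnorm_catr /fpow fnorm_catl.
by rewrite /wgen_prod map_nseq /wgen /= ltNge; case: (0 <= t.2)%R.
Qed.

Lemma exp_sum_nseq n x q :
  exp_sum (nseq n x) q = (if x.1 == q then (if x.2 then -1 else 1) *+ n else 0)%R.
Proof.
elim: n => [|n IH]; first by rewrite /exp_sum big_nil; case: ifP.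
by rewrite /= exp_sum_cons IH; case: ifP; rewrite ?addr0 // mulrS.
Qed.

Lemma exp_sum_expand e q : exp_sum (expand e) q = Rw e q.
Proof.
elim: e => [|[p s] e IH]; first by rewrite /exp_sum /Rw !big_nil.
rewrite /expand /= -/(expand e) exp_sum_cat exp_sum_nseq IH /Rw big_cons /=.
case: eqP => _; last by rewrite add0r.
congr (_ + _)%R.
by case: s => n /=; rewrite ?NegzE ?mulNrn natz.
Qed.

Lemma has_Rw_neq0 e : ~ F2 (wexpr_eval e) -> has (fun p => Rw e p != 0%R) (Supp e).
Proof.
move=> eF2; apply/negPn/negP => /hasPn Rw0; apply: eF2.
rewrite wexpr_eval_expand; apply: F2_wgen_prod => q; rewrite exp_sum_expand.
have [qS | qS] := boolP (q \in Supp e); first by move/Rw0: qS; rewrite negbK => /eqP.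
rewrite /Rw big_seq_cond big1 // => t /andP[te /eqP tq]; case/negP: qS.
by rewrite /Supp mem_undup -tq map_f.
Qed.

Local Open Scope ring_scope.

(** * Clearing denominators *)

Definition odd_run_exp (N : nat) (a : int) (k : nat) : nat :=
  absz (2 * N%:Z + a - `|a| + 1 + 2 * k%:Z)%R.

Section ClearDenominators.
Variables (K : fieldType) (x : K).
Hypothesis x_neq0 : x != 0.

Lemma expr_shiftz (n k : nat) (m : int) : k%:Z = n%:Z + m -> x ^+ n * x ^ m = x ^+ k.
Proof. by move=> km; rewrite !exprnP -expfzDr // -km. Qed.

Lemma odd_factor_sum (a : int) : x ^+ 2 - 1 != 0 ->
  (x ^ (2 * `|a|) - 1) * x ^ a / (x ^ (`|a| - 1) * (x ^+ 2 - 1))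
  = \sum_(k < absz a) x ^ (a - `|a| + 1 + 2 * k%:Z).
Proof.
move=> x21.
have -> : x ^ (2 * `|a|) = (x ^+ 2) ^+ absz a.
  by rewrite -exprM exprnP; congr (_ ^ _); lia.
have shift k : x ^ (a - `|a| + 1 + 2 * k%:Z) = x ^ a / x ^ (`|a| - 1) * (x ^+ 2) ^+ k.
  rewrite -exprM exprnP invr_expz -!expfzDr //; congr (_ ^ _); lia.
under eq_bigr do rewrite shift.
rewrite -mulr_sumr subrX1.
by field; rewrite x21 expfz_neq0.
Qed.

Lemma odd_run_clear (N : nat) (a : int) : x ^+ 2 - 1 != 0 -> (absz a <= N)%N ->
  x ^+ (2 * N) * ((x ^ (2 * `|a|) - 1) * x ^ a / (x ^ (`|a| - 1) * (x ^+ 2 - 1)))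
  = \sum_(k < absz a) x ^+ odd_run_exp N a k.
Proof.
move=> x21 aN; rewrite odd_factor_sum // mulr_sumr.
by apply: eq_bigr => k _; apply: expr_shiftz; rewrite /odd_run_exp; lia.
Qed.

Lemma even_diff_clear (M : nat) (b : int) : (absz b <= M)%N ->
  x ^+ (2 * M) * (1 - x ^ (2 * b)) = x ^+ (2 * M) - x ^+ (2 * absz (M%:Z + b)).
Proof. by move=> bM; rewrite mulrBr mulr1 (@expr_shiftz _ (2 * absz (M%:Z + b))) //; lia. Qed.

End ClearDenominators.

(* The exponent of the run farthest from 2N: it lies in no run that is shorter or on
   the other side of 2N. *)
Definition odd_run_top (N : nat) (a : int) : nat := absz (2 * N%:Z + 2 * a - Num.sg a)%R.

Lemma odd_run_exp_top N a : a != 0 -> (absz a <= N)%N ->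
  odd_run_exp N a (if 0 < a then (absz a).-1 else 0) = odd_run_top N a.
Proof. by rewrite /odd_run_exp /odd_run_top; case: ifP; lia. Qed.

Lemma odd_run_exp_neq_top N a a0 k : a != 0 -> a0 != 0 ->
  (absz a <= absz a0)%N -> (absz a0 <= N)%N -> a != a0 -> (k < absz a)%N ->
  odd_run_exp N a k != odd_run_top N a0.
Proof. by rewrite /odd_run_exp /odd_run_top; lia. Qed.

(** * Monomial supports *)

Section Polynomials.
Variable R : nzRingType.

Definition odd_run (N : nat) (a : int) : {poly R} :=
  \sum_(k < absz a) 'X^(odd_run_exp N a k).
Definition even_diff (M : nat) (b : int) : {poly R} :=
  'X^(2 * M) - 'X^(2 * absz (M%:Z + b)).

Lemma coef_odd_run_out N a i :
  (forall k, (k < absz a)%N -> i != odd_run_exp N a k) -> (odd_run N a)`_i = 0.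
Proof.
move=> iout; rewrite coef_sum big1 // => k _.
by rewrite coefXn (negbTE (iout k (ltn_ord k))).
Qed.

Lemma coef_odd_run_even N a i : ~~ odd i -> (odd_run N a)`_i = 0.
Proof.
move=> ei; apply: coef_odd_run_out => k _; apply: contraNneq ei => ->.
have := modn2 (odd_run_exp N a k); case: odd => //= e0.
by move: e0; rewrite /odd_run_exp; lia.
Qed.

Lemma coef_odd_run_top N a : a != 0 -> (absz a <= N)%N ->
  (odd_run N a)`_(odd_run_top N a) = 1.
Proof.
move=> a_neq0 aN.
have ka : ((if (0 < a)%R then (absz a).-1 else 0) < absz a)%N by case: ifP; lia.
rewrite coef_sum (bigD1 (Ordinal ka)) //= -odd_run_exp_top // coefXn eqxx big1 ?addr0 //.
move=> l lk.
rewrite coefXn; case: eqP => // /eqP; rewrite /odd_run_exp => ekl; case/eqP: lk.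
by apply: val_inj => /=; move: ekl; case: ifP; lia.
Qed.

Lemma coef_even_diff_odd M b j : odd j -> (even_diff M b)`_j = 0.
Proof.
move=> oj; have j2 m : (j == 2 * m)%N = false by apply: contraTF oj => /eqP ->; rewrite oddM.
by rewrite coefB !coefXn !j2 subrr.
Qed.

Lemma coef_even_diff_shift M b b0 : b0 != 0 -> (absz b <= M)%N -> (absz b0 <= M)%N ->
  (even_diff M b)`_(2 * absz (M%:Z + b0)) = - (b == b0)%:R.
Proof.
move=> b0_neq0 bM b0M; rewrite coefB !coefXn (_ : (_ == 2 * M)%N = false) ?sub0r.
  have [-> | bb0] := eqVneq b b0; first by rewrite eqxx.
  by rewrite (_ : (_ == _)%N = false) //; apply/eqP; lia.
by apply/eqP; lia.
Qed.

End Polynomials.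

Arguments odd_run {R}.
Arguments even_diff {R}.

Lemma has_argmax (T : eqType) (s : seq T) (P : pred T) (f : T -> nat) :
  has P s -> exists x, [/\ x \in s, P x & {in s, forall y, P y -> (f y <= f x)%N}].
Proof.
move=> sP.
have exP : exists n, has (fun x => P x && (f x == n)) s.
  by case/hasP: sP => x xs Px; exists (f x); apply/hasP; exists x; rewrite ?Px ?eqxx.
have ubP n : has (fun x => P x && (f x == n)) s -> (n <= \max_(x <- s) f x)%N.
  by case/hasP => x xs /andP[_ /eqP <-]; apply: leq_bigmax_seq.
case: (ex_maxnP exP ubP) => n /hasP[x xs /andP[Px /eqP fx]] nmax.
exists x; split=> // y ys Py; rewrite fx; apply: nmax.
by apply/hasP; exists y; rewrite ?Py ?eqxx.
Qed.

Section OddEvenCoefficients.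
Context {R : numDomainType}.

Definition phi_coef (N M : nat) (S : seq (int * int)) (c : int * int -> int) (i j : nat) : R :=
  \sum_(p <- S) (c p * Num.sg p.1)%:~R * (odd_run N p.1)`_i * (even_diff M p.2)`_j.

Lemma phi_coef_even N M S c i j : ~~ odd i -> phi_coef N M S c i j = 0.
Proof.
by move=> ei; rewrite /phi_coef big1 // => p _; rewrite coef_odd_run_even // mulr0 mul0r.
Qed.

Lemma phi_coef_odd N M S c i j : odd j -> phi_coef N M S c i j = 0.
Proof. by move=> oj; rewrite /phi_coef big1 // => p _; rewrite coef_even_diff_odd // mulr0. Qed.

Lemma phi_coef_neq0 N M S c : uniq S ->
  {in S, forall p, [/\ p.1 != 0, p.2 != 0, (absz p.1 <= N)%N & (absz p.2 <= M)%N]} ->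
  has (fun p => c p != 0) S -> exists i j, phi_coef N M S c i j != 0.
Proof.
move=> Suniq Sbound Snz.
have [[a0 b0] [p0S cp0 p0max]] := has_argmax (fun p => absz p.1) Snz.
have [/= a0_neq0 b0_neq0 a0N b0M] := Sbound _ p0S.
exists (odd_run_top N a0), (2 * absz (M%:Z + b0)%R)%N.
rewrite /phi_coef (bigD1_seq (a0, b0)) //= big1_seq ?addr0.
  rewrite coef_odd_run_top // coef_even_diff_shift // eqxx mulr1 mulrN1 oppr_eq0.
  by rewrite intr_eq0 mulf_neq0 // sgr_eq0.
move=> [a b] /andP[/= pp0 pS]; have [/= a_neq0 b_neq0 aN bM] := Sbound _ pS.
have [-> | cp] := eqVneq (c (a, b)) 0; first by rewrite !mul0r.
rewrite coef_even_diff_shift //; have [bb0 | ] := eqVneq b b0; last by rewrite oppr0 mulr0.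
rewrite xpair_eqE bb0 eqxx andbT in pp0.
rewrite coef_odd_run_out ?mulr0 ?mul0r // => k ka.
by rewrite eq_sym odd_run_exp_neq_top //; apply: p0max pS cp.
Qed.

End OddEvenCoefficients.

(** * The polynomials λ^{2N} μ^{2M} Φ_w and λ^{2N} μ^{2M} Ψ_w *)

Lemma X2_sub1_neq0 (R : nzRingType) : ('X ^+ 2 - 1 : {poly R}) != 0.
Proof. by rewrite -polyC1 monic_neq0 // monicXnsubC. Qed.

Lemma lam_neq0 : lam != 0.
Proof. by rewrite tofrac_eq0 polyC_eq0 polyX_eq0. Qed.

Lemma mu_neq0 : mu != 0.
Proof. by rewrite tofrac_eq0 polyX_eq0. Qed.

Lemma lam2_sub1_neq0 : lam ^+ 2 - 1 != 0.
Proof.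
have -> : lam ^+ 2 - 1 = tofrac ('X ^+ 2 - 1)%:P by rewrite !(rmorphB, rmorph1, rmorphXn).
by rewrite tofrac_eq0 polyC_eq0 X2_sub1_neq0.
Qed.

Lemma mu2_sub1_neq0 : mu ^+ 2 - 1 != 0.
Proof.
have -> : mu ^+ 2 - 1 = tofrac ('X ^+ 2 - 1) by rewrite rmorphB rmorph1 rmorphXn.
by rewrite tofrac_eq0 X2_sub1_neq0.
Qed.

(* In {poly {poly algC}} the outer variable is μ and the inner one λ: ptensor A B is
   A(λ) B(μ). *)
Definition ptensor (A B : {poly algC}) : {poly {poly algC}} := A%:P * map_poly polyC B.

Lemma coef_ptensor A B i j : ((ptensor A B)`_j)`_i = A`_i * B`_j.
Proof. by rewrite coefCM coef_map /= coefMC. Qed.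

Lemma tofrac_ptensor A B : tofrac (ptensor A B) = tofrac A%:P * tofrac (map_poly polyC B).
Proof. exact: rmorphM. Qed.

Lemma tofrac_lam_scale (z : int) (A : {poly algC}) :
  tofrac (z%:~R *: A)%:P = z%:~R * tofrac A%:P.
Proof. by rewrite -mul_polyC !rmorphM /= !rmorph_int. Qed.

Lemma tofrac_lam_odd_run N a :
  tofrac (odd_run N a)%:P = \sum_(k < absz a) lam ^+ odd_run_exp N a k.
Proof. by rewrite !rmorph_sum; apply: eq_bigr => k _; rewrite !rmorphXn. Qed.

Lemma tofrac_mu_odd_run N a :
  tofrac (map_poly polyC (odd_run N a)) = \sum_(k < absz a) mu ^+ odd_run_exp N a k.
Proof. by rewrite !rmorph_sum; apply: eq_bigr => k _; rewrite !rmorphXn /= map_polyX. Qed.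

Lemma tofrac_lam_even_diff M b :
  tofrac (even_diff M b)%:P = lam ^+ (2 * M) - lam ^+ (2 * absz (M%:Z + b)).
Proof. by rewrite !(rmorphB, rmorphXn). Qed.

Lemma tofrac_mu_even_diff M b :
  tofrac (map_poly polyC (even_diff M b)) = mu ^+ (2 * M) - mu ^+ (2 * absz (M%:Z + b)).
Proof. by rewrite !(rmorphB, rmorphXn) /= map_polyX. Qed.

Lemma Phi_summand_clear N M (c a b : int) : (absz a <= N)%N -> (absz b <= M)%N ->
  lam ^+ (2 * N) * mu ^+ (2 * M) *
  (c%:~R * (Num.sg a)%:~R * (1 - mu ^ (2 * b)) * ((lam ^ (2 * `|a|) - 1) * lam ^ a)
     / (lam ^ (`|a| - 1) * (lam ^+ 2 - 1)))
  = tofrac (ptensor ((c * Num.sg a)%:~R *: odd_run N a) (even_diff M b)).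
Proof.
move=> aN bM; rewrite tofrac_ptensor tofrac_lam_scale tofrac_lam_odd_run tofrac_mu_even_diff.
rewrite -(odd_run_clear lam_neq0 lam2_sub1_neq0 aN) -(even_diff_clear mu_neq0 bM) intrM.
by ring.
Qed.

Lemma Psi_summand_clear N M (c a b : int) : (absz a <= N)%N -> (absz b <= M)%N ->
  lam ^+ (2 * N) * mu ^+ (2 * M) *
  (c%:~R * (Num.sg b)%:~R * (lam ^ (2 * a) - 1) * ((mu ^ (2 * `|b|) - 1) * mu ^ b)
     / (mu ^ (`|b| - 1) * (mu ^+ 2 - 1)))
  = - tofrac (ptensor ((c * Num.sg b)%:~R *: even_diff N a) (odd_run M b)).
Proof.
move=> aN bM; rewrite tofrac_ptensor tofrac_lam_scale tofrac_lam_even_diff tofrac_mu_odd_run.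
rewrite -(odd_run_clear mu_neq0 mu2_sub1_neq0 bM) -(even_diff_clear lam_neq0 aN) intrM.
by ring.
Qed.

Definition max_xexp (e : wexpr) : nat := \max_(p <- Supp e) absz p.1.
Definition max_yexp (e : wexpr) : nat := \max_(p <- Supp e) absz p.2.

Lemma Supp_bound e : wexpr_reduced e -> {in Supp e, forall p,
  [/\ p.1 != 0, p.2 != 0, (absz p.1 <= max_xexp e)%N & (absz p.2 <= max_yexp e)%N]}.
Proof.
move=> /andP[enz _] p pS.
have /mapP[t te pt] : p \in map fst e by rewrite -mem_undup.
have /and3P[t1 t2 _] := allP enz t te.
by rewrite pt; split=> //; apply: leq_bigmax_seq; rewrite -?pt.
Qed.

Definition Phi_poly (e : wexpr) : {poly {poly algC}} :=
  \sum_(p <- Supp e) ptensor ((Rw e p * Num.sg p.1)%:~R *: odd_run (max_xexp e) p.1)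
                             (even_diff (max_yexp e) p.2).
Definition Psi_poly (e : wexpr) : {poly {poly algC}} :=
  \sum_(p <- Supp e) ptensor ((Rw e p * Num.sg p.2)%:~R *: even_diff (max_xexp e) p.1)
                             (odd_run (max_yexp e) p.2).

Lemma Phi_polyE e : wexpr_reduced e ->
  tofrac (Phi_poly e) = lam ^+ (2 * max_xexp e) * mu ^+ (2 * max_yexp e) * Phi e.
Proof.
move=> er; rewrite /Phi mulr_sumr rmorph_sum; apply: eq_big_seq => p pS.
by have [_ _ aN bM] := Supp_bound er pS; rewrite Phi_summand_clear.
Qed.

Lemma Psi_polyE e : wexpr_reduced e ->
  tofrac (Psi_poly e) = - (lam ^+ (2 * max_xexp e) * mu ^+ (2 * max_yexp e) * Psi e).
Proof.
move=> er; rewrite /Psi mulr_sumr rmorph_sum -sumrN; apply: eq_big_seq => p pS.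
by have [_ _ aN bM] := Supp_bound er pS; rewrite Psi_summand_clear // opprK.
Qed.

Definition swap_pair (p : int * int) : int * int := (p.2, p.1).

Lemma swap_pairK : involutive swap_pair. Proof. by case. Qed.

Lemma coef_Phi_poly e i j :
  ((Phi_poly e)`_j)`_i = phi_coef (max_xexp e) (max_yexp e) (Supp e) (Rw e) i j.
Proof. by rewrite !coef_sum; apply: eq_bigr => p _; rewrite coef_ptensor coefZ. Qed.

Lemma coef_Psi_poly e i j : ((Psi_poly e)`_j)`_i =
  phi_coef (max_yexp e) (max_xexp e) (map swap_pair (Supp e)) (Rw e \o swap_pair) j i.
Proof.
rewrite /phi_coef big_map !coef_sum; apply: eq_bigr => p _.
by rewrite coef_ptensor coefZ /= swap_pairK mulrAC.
Qed.

Lemma Phi_Psi_coef e (a b : algC) : wexpr_reduced e ->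
  cst a * Phi e + cst b * Psi e = 0 -> forall i j,
  a * phi_coef (max_xexp e) (max_yexp e) (Supp e) (Rw e) i j
  = b * phi_coef (max_yexp e) (max_xexp e) (map swap_pair (Supp e)) (Rw e \o swap_pair) j i.
Proof.
move=> er ab0 i j; set N := max_xexp e; set M := max_yexp e.
have poly0 : (a%:P)%:P * Phi_poly e - (b%:P)%:P * Psi_poly e = 0.
  apply/eqP; rewrite -tofrac_eq0 rmorphB !rmorphM /= Phi_polyE // Psi_polyE //.
  have -> : cst a * (lam ^+ (2 * N) * mu ^+ (2 * M) * Phi e)
          - cst b * - (lam ^+ (2 * N) * mu ^+ (2 * M) * Psi e)
          = lam ^+ (2 * N) * mu ^+ (2 * M) * (cst a * Phi e + cst b * Psi e) by ring.
  by rewrite ab0 mulr0.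
move/(congr1 (fun P : {poly {poly algC}} => (P`_j)`_i))/eqP: poly0.
by rewrite !(coefB, coefCM, coef0) coef_Phi_poly coef_Psi_poly subr_eq0 => /eqP.
Qed.

Lemma Phi_Psi_lin_indep e : wexpr_reduced e -> has (fun p => Rw e p != 0) (Supp e) ->
  forall a b : algC, cst a * Phi e + cst b * Psi e = 0 -> a = 0 /\ b = 0.
Proof.
move=> er nz a b /(Phi_Psi_coef er) coef_eq.
set N := max_xexp e; set M := max_yexp e; set S := Supp e in nz coef_eq *.
split.
  have [i [j nz_ij]] := phi_coef_neq0 (R := algC) (undup_uniq _) (Supp_bound er) nz.
  have odd_i : odd i by apply: contraNT nz_ij => ei; rewrite phi_coef_even.
  have := coef_eq i j; rewrite [in RHS]phi_coef_odd // mulr0 => /eqP.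
  by rewrite mulf_eq0 (negbTE nz_ij) orbF => /eqP.
have swap_uniq : uniq (map swap_pair S).
  by rewrite (map_inj_uniq (can_inj swap_pairK)) undup_uniq.
have swap_bound : {in map swap_pair S, forall p,
    [/\ p.1 != 0, p.2 != 0, (absz p.1 <= M)%N & (absz p.2 <= N)%N]}.
  by move=> _ /mapP[p pS ->]; have [] := Supp_bound er pS.
have swap_nz : has (fun p => (Rw e \o swap_pair) p != 0) (map swap_pair S).
  by case/hasP: nz => p pS cp; apply/hasP; exists (swap_pair p); rewrite ?map_f //= swap_pairK.
have [j [i nz_ji]] := phi_coef_neq0 (R := algC) swap_uniq swap_bound swap_nz.
have odd_j : odd j by apply: contraNT nz_ji => ej; rewrite phi_coef_even.
have := coef_eq i j; rewrite [in LHS]phi_coef_odd // mulr0 => /esym/eqP.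
by rewrite mulf_eq0 (negbTE nz_ji) orbF => /eqP.
Qed.

Theorem proposition6p2 (w : word) (e : wexpr) :
  freduced w -> F1 w -> ~ F2 w ->
  wexpr_reduced e -> wexpr_eval e = w ->
  [/\ Phi e != 0, Psi e != 0 &
      forall a b : algC, cst a * Phi e + cst b * Psi e = 0 -> a = 0 /\ b = 0].
Proof.
move=> _ _ wF2 er ew; rewrite -ew in wF2.
have indep := Phi_Psi_lin_indep er (has_Rw_neq0 wF2).
have cst0 : cst 0 = 0 by rewrite /cst !rmorph0.
split=> //; apply/eqP => P0.
  move: (indep 1 0); rewrite P0 cst0 mulr0 mul0r addr0 => /(_ erefl) [/eqP].
  by rewrite oner_eq0.
move: (indep 0 1); rewrite P0 cst0 mulr0 mul0r add0r => /(_ erefl) [_ /eqP].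
by rewrite oner_eq0.
Qed.
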